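(* Let $v,w\in\mathbb C\cong\mathbb R^2$ be linearly independent (with no restriction on their lengths). Let the tracer point of a Prytz planimeter of length $\ell$ traverse the closed polygonal ''figure eight'' with successive vertices $0,v,v+w,w,-w,-v-w,-v,0$ (base point $0$). Then the resulting holonomy $\tilde H:S^1\to S^1$ is represented by a matrix in $SU(1,1)$ of trace $2+16\operatorname{Im}^2(\bar bd)\,|ad+bc|^2>2$, where $a=\cosh\frac{|v|}{2\ell}$, $b=-\sinh\frac{|v|}{2\ell}\frac{v}{|v|}$, $c=\cosh\frac{|w|}{2\ell}$, $d=-\sinh\frac{|w|}{2\ell}\frac{w}{|w|}$. In particular $\tilde H$ has exactly two fixed points on $S^1$ (one attracting, one repelling), even though the oriented area enclosed by this loop is $0$ and the loop may be arbitrarily short. *)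

From Stdlib Require Import Reals List.
From Coquelicot Require Import Coquelicot.
Open Scope R_scope.

(* Configuration of a Prytz planimeter of length l: the tracer point is
   gamma t, the rod direction is the unit complex number u t, the blade
   (hatchet) point is gamma t - l * u t.  The no-skid constraint says that
   the velocity of the blade is parallel to the rod, i.e.
   Im (conj(u) * blade') = 0. *)
Definition planimeter_motion (l : R) (gamma u : R -> C) : Prop :=
  forall t, 0 <= t <= 1 ->
    Cmod (u t) = 1 /\
    exists dg du : C,
      is_derive gamma t dg /\ is_derive u t du /\
      Im (Cmult (Cconj (u t)) (Cminus dg (Cmult (RtoC l) du))) = 0.

Definition seg_hol (l : R) (p q z0 z1 : C) : Prop :=
  exists u : R -> C, u 0 = z0 /\ u 1 = z1 /\
    planimeter_motion l (fun t => Cplus p (Cmult (RtoC t) (Cminus q p))) u.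

Fixpoint poly_hol (l : R) (vs : list C) (z0 zn : C) : Prop :=
  match vs with
  | p :: ((q :: _) as rest) => exists z1, seg_hol l p q z0 z1 /\ poly_hol l rest z1 zn
  | _ => z0 = zn
  end.

Record cmat2 := CMat2 { m11 : C; m12 : C; m21 : C; m22 : C }.

Definition mdet (M : cmat2) : C :=
  Cminus (Cmult (m11 M) (m22 M)) (Cmult (m12 M) (m21 M)).
Definition mtrace (M : cmat2) : C := Cplus (m11 M) (m22 M).

(* SU(1,1) = { M : det M = 1 and M^* J M = J }, J = diag(1,-1);
   the matrix identity M^* J M = J written entrywise. *)
Definition in_SU11 (M : cmat2) : Prop :=
  mdet M = RtoC 1 /\
  Cminus (Cmult (Cconj (m11 M)) (m11 M)) (Cmult (Cconj (m21 M)) (m21 M)) = RtoC 1 /\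
  Cminus (Cmult (Cconj (m11 M)) (m12 M)) (Cmult (Cconj (m21 M)) (m22 M)) = RtoC 0 /\
  Cminus (Cmult (Cconj (m12 M)) (m11 M)) (Cmult (Cconj (m22 M)) (m21 M)) = RtoC 0 /\
  Cminus (Cmult (Cconj (m12 M)) (m12 M)) (Cmult (Cconj (m22 M)) (m22 M)) = RtoC (-1).

Definition mob (M : cmat2) (z : C) : C :=
  Cdiv (Cplus (Cmult (m11 M) z) (m12 M)) (Cplus (Cmult (m21 M) z) (m22 M)).

Definition on_circle (z : C) : Prop := Cmod z = 1.

Definition attracting_on_circle (f : C -> C) (z1 : C) : Prop :=
  exists eps, 0 < eps /\
    forall z, on_circle z -> Cmod (Cminus z z1) < eps ->
      is_lim_seq (fun n => Cmod (Cminus (Nat.iter n f z) z1)) 0.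

Definition repelling_on_circle (f : C -> C) (z2 : C) : Prop :=
  exists eps, 0 < eps /\
    forall z, on_circle z -> 0 < Cmod (Cminus z z2) < eps ->
      exists n : nat, eps <= Cmod (Cminus (Nat.iter n f z) z2).

(* Along a segment with direction [E] traversed at speed [2 l K], the no-skid condition makes
   the rod direction [u] on the unit circle solve the Riccati equation
   [u' = K (E - conj E u^2)].  Its solutions are the orbits of the one-parameter subgroup
   [t |-> (cosh (K t), sinh (K t) E)] of SU(1,1) acting by Moebius maps, and pulling a solution
   back along this flow gives a constant curve, so the holonomy of a segment is the Moebius
   map of its SU(1,1) matrix and that of a polygon is the product of these matrices.

   For the figure eight the edges are v, w, -v, -2w, -v, w, v.  With A, W the matrices of
   the edges v, w, conjugation by J = diag(1,-1) inverts A and W, so the product is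
   B (J B^-1 J) for the commutator B = A W A^-1 W^-1.  Such a product has the real diagonal
   entry 1 + 2 |beta_B|^2, and expanding the commutator gives
   beta_B = -2i Im(conj b d) (a d + b c).  A matrix of SU(1,1) with real diagonal entry
   alpha > 1 acts on the circle with exactly the fixed points +- beta/|beta|; the ratio of the
   distances to them is multiplied by (alpha - |beta|)/(alpha + |beta|) < 1 at each step. *)

From Stdlib Require Import Reals List Lra Psatz Nsatz.
From Coquelicot Require Import Coquelicot.
Import ListNotations.
Open Scope R_scope.

Lemma cosh2_sinh2 (x : R) : cosh x ^ 2 - sinh x ^ 2 = 1.
Proof.
  unfold cosh, sinh. rewrite exp_Ropp. pose proof (exp_pos x). field. lra.
Qed.

Lemma cosh_add (x y : R) : cosh (x + y) = cosh x * cosh y + sinh x * sinh y.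
Proof.
  unfold cosh, sinh. rewrite !exp_Ropp, exp_plus.
  pose proof (exp_pos x). pose proof (exp_pos y). field. lra.
Qed.

Lemma sinh_add (x y : R) : sinh (x + y) = sinh x * cosh y + cosh x * sinh y.
Proof.
  unfold cosh, sinh. rewrite !exp_Ropp, exp_plus.
  pose proof (exp_pos x). pose proof (exp_pos y). field. lra.
Qed.

Lemma cosh_pos (x : R) : 0 < cosh x.
Proof. unfold cosh. pose proof (exp_pos x). pose proof (exp_pos (- x)). lra. Qed.

Lemma sinh_pos (x : R) : 0 < x -> 0 < sinh x.
Proof. intros Hx. unfold sinh. assert (exp (- x) < exp x) by (apply exp_increasing; lra). lra. Qed.

Definition Cnorm2 (z : C) : R := fst z * fst z + snd z * snd z.

Lemma Cnorm2_gt_0 (z : C) : z <> 0%C -> 0 < Cnorm2 z.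
Proof.
  destruct z as [x y]; unfold Cnorm2; simpl; intros Hz.
  destruct (Req_dec x 0), (Req_dec y 0); subst; try nra. now contradict Hz.
Qed.

Lemma Cmod_sqr (z : C) : Cmod z ^ 2 = Cnorm2 z.
Proof. unfold Cmod, Cnorm2. rewrite pow2_sqrt; [ring | nra]. Qed.

Lemma Cmod_eq_1 (z : C) : Cmod z = 1 <-> Cnorm2 z = 1.
Proof.
  rewrite <- Cmod_sqr. split; intros H.
  - rewrite H; ring.
  - pose proof (Cmod_ge_0 z). nra.
Qed.

Lemma Cnorm2_mult (x y : C) : Cnorm2 (x * y) = Cnorm2 x * Cnorm2 y.
Proof. destruct x, y; unfold Cnorm2; simpl; ring. Qed.

Lemma Cnorm2_conj (z : C) : Cnorm2 (Cconj z) = Cnorm2 z.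
Proof. destruct z; unfold Cnorm2; simpl; ring. Qed.

Lemma Cnorm2_opp (z : C) : Cnorm2 (- z) = Cnorm2 z.
Proof. destruct z; unfold Cnorm2; simpl; ring. Qed.

Lemma Cnorm2_unit_neq_0 (z : C) : Cnorm2 z = 1 -> z <> 0%C.
Proof. intros H ->. unfold Cnorm2 in H; simpl in H; lra. Qed.

Lemma Copp_neq_0 (z : C) : z <> 0%C -> (- z)%C <> 0%C.
Proof. intros Hz H0. apply Hz. replace z with (- - z)%C by ring. rewrite H0. ring. Qed.

Lemma Cminus_neq_0 (x y : C) : x <> y -> (x - y)%C <> 0%C.
Proof. intros Hxy H0. apply Hxy, Ceq_minus, H0. Qed.

Lemma Cmult_integral (x y : C) : (x * y)%C = 0%C -> x = 0%C \/ y = 0%C.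
Proof.
  intros Hxy. destruct (Ceq_dec x 0%C) as [| Hx]; [now left |].
  destruct (Ceq_dec y 0%C) as [| Hy]; [now right |].
  now destruct (Cmult_neq_0 x y Hx Hy).
Qed.

Lemma Cconj_unit (z : C) : Cnorm2 z = 1 -> Cconj z = (/ z)%C.
Proof.
  destruct z as [x y]; unfold Cnorm2; simpl; intros H.
  unfold Cconj, Cinv; simpl. rewrite !Rmult_1_r, H. f_equal; field.
Qed.

Lemma Cconj_RtoC (r : R) : Cconj (RtoC r) = RtoC r.
Proof. unfold Cconj, RtoC; simpl; f_equal; ring. Qed.

Lemma Cnorm2_sub_conj (z : C) : Cnorm2 (z - Cconj z) = 4 * Im z ^ 2.
Proof. destruct z; unfold Cnorm2, Im; simpl; ring. Qed.

Lemma Cmod_sub_unit_le_2 (x y : C) : Cnorm2 x = 1 -> Cnorm2 y = 1 -> Cmod (x - y) <= 2.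
Proof.
  intros Hx Hy. unfold Cminus. eapply Rle_trans; [apply Cmod_triangle |].
  rewrite Cmod_opp. apply Cmod_eq_1 in Hx, Hy. lra.
Qed.

Lemma Cnorm2_normalize (D : C) : D <> 0%C -> Cnorm2 (D / RtoC (Cmod D)) = 1.
Proof.
  intros HD. apply Cmod_eq_1. pose proof (proj1 (Cmod_gt_0 D) HD).
  rewrite Cmod_div, Cmod_R, Rabs_pos_eq by (try lra; intros [=]; lra). field. lra.
Qed.

Lemma Cpolar (D : C) : D <> 0%C -> D = (RtoC (Cmod D) * (D / RtoC (Cmod D)))%C.
Proof. intros HD. pose proof (proj1 (Cmod_gt_0 D) HD). field. intros [=]. lra. Qed.

Lemma is_derive_eq (f : R -> R) (t l l' : R) :
  is_derive f t l -> l = l' -> is_derive f t l'.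
Proof. now intros H <-. Qed.

Lemma is_derive_Ceq (f : R -> C) (t : R) (l l' : C) :
  is_derive f t l -> l = l' -> is_derive f t l'.
Proof. now intros H <-. Qed.

Lemma is_derive_C (f : R -> C) (t : R) (d : C) :
  is_derive f t d <->
  is_derive (fun s => fst (f s)) t (fst d) /\ is_derive (fun s => snd (f s)) t (snd d).
Proof.
  split.
  - intros H; split; eapply filterdiff_ext_lin.
    + exact (filterdiff_comp' f _ t _ _ H (filterdiff_linear _ is_linear_fst)).
    + reflexivity.
    + exact (filterdiff_comp' f _ t _ _ H (filterdiff_linear _ is_linear_snd)).
    + reflexivity.
  - intros [H1 H2]. eapply filterdiff_ext_lin.
    + eapply filterdiff_ext.
      2: apply (filterdiff_comp'_2
                  (W := prod_NormedModule R_AbsRing R_NormedModule R_NormedModule)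
                  (fun s => fst (f s)) (fun s => snd (f s)) (fun a b => (a, b)) t _ _
                  (fun a b => (a, b)) H1 H2).
      * intros y; simpl. destruct (f y); reflexivity.
      * apply (filterdiff_linear
                 (fun p : prod_NormedModule R_AbsRing R_NormedModule R_NormedModule => (fst p, snd p))).
        apply is_linear_prod; [apply is_linear_fst | apply is_linear_snd].
    + intros y. destruct d; reflexivity.
Qed.

Section ComplexCalculus.

Variables (f g : R -> C) (t : R) (df dg : C).
Hypotheses (Hf : is_derive f t df) (Hg : is_derive g t dg).

Lemma is_derive_Cmult :
  is_derive (fun s => (f s * g s)%C) t (df * g t + f t * dg)%C.
Proof.
  apply is_derive_C in Hf as [F1 F2]; apply is_derive_C in Hg as [G1 G2].
  apply is_derive_C; split; simpl; eapply is_derive_eq.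
  - exact (is_derive_minus _ _ _ _ _ (Derive.is_derive_mult _ _ _ _ _ F1 G1)
                                     (Derive.is_derive_mult _ _ _ _ _ F2 G2)).
  - cbn -[Rmult Rplus Ropp]; ring.
  - exact (is_derive_plus _ _ _ _ _ (Derive.is_derive_mult _ _ _ _ _ F1 G2)
                                    (Derive.is_derive_mult _ _ _ _ _ F2 G1)).
  - cbn -[Rmult Rplus Ropp]; ring.
Qed.

Lemma is_derive_Cplus : is_derive (fun s => (f s + g s)%C) t (df + dg)%C.
Proof. exact (is_derive_plus f g t df dg Hf Hg). Qed.

Lemma is_derive_Copp : is_derive (fun s => (- f s)%C) t (- df)%C.
Proof. exact (is_derive_opp f t df Hf). Qed.

Lemma is_derive_Cconj : is_derive (fun s => Cconj (f s)) t (Cconj df).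
Proof.
  apply is_derive_C in Hf as [F1 F2].
  apply is_derive_C; split; [exact F1 | exact (is_derive_opp _ _ _ F2)].
Qed.

Lemma is_derive_Cinv :
  f t <> 0%C -> is_derive (fun s => Cinv (f s)) t (- df / (f t * f t))%C.
Proof.
  intros Hnz. pose proof (Cnorm2_gt_0 _ Hnz) as Hn. unfold Cnorm2 in Hn.
  apply is_derive_C in Hf as [F1 F2].
  assert (N : is_derive (fun s => fst (f s) ^ 2 + snd (f s) ^ 2) t
                (2 * (fst (f t) * fst df + snd (f t) * snd df))).
  { eapply is_derive_eq.
    - exact (is_derive_plus _ _ _ _ _ (is_derive_pow _ 2 _ _ F1) (is_derive_pow _ 2 _ _ F2)).
    - cbn -[Rmult Rplus pow]; ring. }
  pose proof (is_derive_inv _ _ _ N ltac:(nra)) as NI.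
  destruct df as [dx dy].
  assert (Hsq : forall x y : R,
    (x * x - y * y) ^ 2 + (x * y + y * x) ^ 2 = (x ^ 2 + y ^ 2) ^ 2) by (intros; ring).
  apply is_derive_C; split; eapply is_derive_eq.
  - exact (Derive.is_derive_mult _ _ _ _ _ F1 NI).
  - cbn -[Rmult Rplus Rinv pow]. rewrite Hsq.
    revert Hn; generalize (fst (f t)) (snd (f t)); intros x y Hn. field; nra.
  - exact (Derive.is_derive_mult _ _ _ _ _ (is_derive_opp _ _ _ F2) NI).
  - cbn -[Rmult Rplus Rinv pow]. rewrite Hsq.
    revert Hn; generalize (fst (f t)) (snd (f t)); intros x y Hn. field; nra.
Qed.

End ComplexCalculus.

Lemma is_derive_Rconst (a t : R) : is_derive (fun _ : R => a) t 0.
Proof. exact (is_derive_const a t). Qed.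

Lemma is_derive_RtoC (h : R -> R) (t dh : R) :
  is_derive h t dh -> is_derive (fun s => RtoC (h s)) t (RtoC dh).
Proof. intros H. apply is_derive_C; simpl; split; [exact H | apply is_derive_Rconst]. Qed.

Lemma is_derive_Cconst (z : C) (t : R) : is_derive (fun _ : R => z) t (RtoC 0).
Proof. exact (is_derive_const (K := R_AbsRing) (V := C_R_NormedModule) z t). Qed.

Lemma is_derive_C_unique (f : R -> C) (t : R) (d1 d2 : C) :
  is_derive f t d1 -> is_derive f t d2 -> d1 = d2.
Proof.
  intros H1 H2. apply is_derive_C in H1 as [A1 A2], H2 as [B1 B2].
  apply is_derive_unique in A1, A2, B1, B2.
  apply injective_projections; congruence.
Qed.

Lemma is_derive_segment (p D : C) (t : R) :
  is_derive (fun s => (p + RtoC s * D)%C) t D.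
Proof.
  assert (Hid : is_derive (fun s : R => s) t 1) by exact (is_derive_id (K := R_AbsRing) t).
  eapply is_derive_Ceq.
  - apply is_derive_Cplus; [apply is_derive_Cconst |].
    apply is_derive_Cmult; [exact (is_derive_RtoC _ _ _ Hid) | apply is_derive_Cconst].
  - cbv beta. ring.
Qed.

Lemma is_derive_cosh_scal (k t : R) : is_derive (fun s => cosh (k * s)) t (k * sinh (k * t)).
Proof.
  eapply is_derive_eq.
  - apply (is_derive_comp cosh (fun s => k * s)).
    + apply is_derive_Reals, derivable_pt_lim_cosh.
    + apply (is_derive_scal (fun s => s)), is_derive_id.
  - cbn. ring.
Qed.

Lemma is_derive_sinh_scal (k t : R) : is_derive (fun s => sinh (k * s)) t (k * cosh (k * t)).
Proof.
  eapply is_derive_eq.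
  - apply (is_derive_comp sinh (fun s => k * s)).
    + apply is_derive_Reals, derivable_pt_lim_sinh.
    + apply (is_derive_scal (fun s => s)), is_derive_id.
  - cbn. ring.
Qed.

Lemma is_derive_0_const_01 (f : R -> C) :
  (forall t, 0 <= t <= 1 -> exists df, is_derive f t df) ->
  (forall t, 0 < t < 1 -> is_derive f t (RtoC 0)) -> f 1 = f 0.
Proof.
  intros Hex H0.
  assert (Hcomp : forall g : C -> R, g = fst \/ g = snd ->
                  g (f 1) = g (f 0)).
  { intros g Hg.
    destruct (MVT_gen (fun t => g (f t)) 0 1 (fun _ => 0)) as [c [_ Hc]]; [| | lra].
    - rewrite Rmin_left, Rmax_right by lra. intros t Ht.
      destruct (proj1 (is_derive_C _ _ _) (H0 t Ht)) as [D1 D2].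
      destruct Hg as [-> | ->]; [exact D1 | exact D2].
    - rewrite Rmin_left, Rmax_right by lra. intros t Ht.
      destruct (Hex t Ht) as [df Hdf]. apply is_derive_C in Hdf as [D1 D2].
      destruct Hg as [-> | ->]; apply continuity_pt_filterlim;
        [apply (ex_derive_continuous (fun s => fst (f s))) |
         apply (ex_derive_continuous (fun s => snd (f s)))]; eexists; eassumption. }
  apply injective_projections; apply Hcomp; auto.
Qed.

Lemma unit_curve_tangent (u : R -> C) (t : R) (du : C) :
  0 < t < 1 -> (forall s, 0 <= s <= 1 -> Cnorm2 (u s) = 1) -> is_derive u t du ->
  fst (u t) * fst du + snd (u t) * snd du = 0.
Proof.
  intros Ht Hu Hdu. apply is_derive_C in Hdu as [D1 D2].
  assert (Hn : is_derive (fun s => Cnorm2 (u s)) t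
                 (2 * (fst (u t) * fst du + snd (u t) * snd du))).
  { eapply is_derive_eq.
    - exact (is_derive_plus _ _ _ _ _ (Derive.is_derive_mult _ _ _ _ _ D1 D1)
                                      (Derive.is_derive_mult _ _ _ _ _ D2 D2)).
    - cbn -[Rmult Rplus]; ring. }
  assert (H1 : is_derive (fun s => Cnorm2 (u s)) t 0).
  { apply (is_derive_ext_loc (fun _ => 1)); [| apply is_derive_Rconst].
    assert (Hr : 0 < Rmin t (1 - t)) by (apply Rmin_glb_lt; lra).
    exists (mkposreal _ Hr). intros s Hs. change (Rabs (s - t) < Rmin t (1 - t)) in Hs.
    apply Rabs_def2 in Hs. pose proof (Rmin_l t (1 - t)). pose proof (Rmin_r t (1 - t)).
    symmetry. apply Hu. lra. }
  pose proof (is_derive_unique _ _ _ Hn) as E1. pose proof (is_derive_unique _ _ _ H1) as E2.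
  lra.
Qed.

(** * SU(1,1) and its Moebius action on the unit circle *)

Ltac pair_ring := repeat apply injective_projections; simpl; ring.

(* A pair [(alpha, beta)] stands for the matrix [[alpha, beta], [conj beta, conj alpha]]
   (see [su_mat]), which lies in SU(1,1) when [is_su11] holds.  [su_adj] is the adjugate,
   hence the inverse in SU(1,1), and [su_flip] is conjugation by diag(1,-1). *)
Definition sumob_num (P : C * C) (z : C) : C := (fst P * z + snd P)%C.

Definition sumob_den (P : C * C) (z : C) : C := (Cconj (snd P) * z + Cconj (fst P))%C.

Definition sumob (P : C * C) (z : C) : C := (sumob_num P z / sumob_den P z)%C.

Definition sumul (P Q : C * C) : C * C :=
  (fst P * fst Q + snd P * Cconj (snd Q), fst P * snd Q + snd P * Cconj (fst Q))%C.

Definition su_one : C * C := (RtoC 1, RtoC 0).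

Definition su_adj (P : C * C) : C * C := (Cconj (fst P), - snd P)%C.

Definition su_flip (P : C * C) : C * C := (fst P, - snd P)%C.

Definition is_su11 (P : C * C) : Prop := Cnorm2 (fst P) - Cnorm2 (snd P) = 1.

Definition su_mat (P : C * C) : cmat2 :=
  CMat2 (fst P) (snd P) (Cconj (snd P)) (Cconj (fst P)).

Lemma is_su11_real (a : R) (b : C) : is_su11 (RtoC a, b) <-> a * a - Cnorm2 b = 1.
Proof. unfold is_su11, Cnorm2 at 1; simpl. split; intros H; lra. Qed.

Lemma is_su11_one : is_su11 su_one.
Proof. unfold is_su11, Cnorm2; simpl; ring. Qed.

Lemma sumul_assoc (P Q S : C * C) : sumul P (sumul Q S) = sumul (sumul P Q) S.
Proof. destruct P as [[] []], Q as [[] []], S as [[] []]; pair_ring. Qed.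

Lemma sumul_one_l (P : C * C) : sumul su_one P = P.
Proof. destruct P as [[] []]; pair_ring. Qed.

Lemma su_adj_one : su_adj su_one = su_one.
Proof. unfold su_adj, su_one; simpl. now rewrite Cconj_RtoC, Copp_0. Qed.

Lemma sumul_adj_r (P : C * C) : is_su11 P -> sumul P (su_adj P) = su_one.
Proof.
  destruct P as [[a1 a2] [b1 b2]]; unfold is_su11, Cnorm2; simpl; intros H.
  repeat apply injective_projections; simpl; lra.
Qed.

Lemma su_adj_mul (P Q : C * C) : su_adj (sumul P Q) = sumul (su_adj Q) (su_adj P).
Proof. destruct P as [[] []], Q as [[] []]; pair_ring. Qed.

Lemma su_flip_mul (P Q : C * C) : su_flip (sumul P Q) = sumul (su_flip P) (su_flip Q).
Proof. destruct P as [[] []], Q as [[] []]; pair_ring. Qed.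

Lemma su_flip_flip (P : C * C) : su_flip (su_flip P) = P.
Proof. destruct P as [[] []]; pair_ring. Qed.

Lemma su_adj_flip (P : C * C) : su_adj (su_flip P) = su_flip (su_adj P).
Proof. destruct P as [[] []]; pair_ring. Qed.

Lemma sumul_flip_adj (P : C * C) :
  sumul P (su_flip (su_adj P))
  = (RtoC (Cnorm2 (fst P) + Cnorm2 (snd P)), RtoC 2 * fst P * snd P)%C.
Proof. destruct P as [[] []]; unfold Cnorm2; pair_ring. Qed.

Lemma is_su11_mul (P Q : C * C) : is_su11 P -> is_su11 Q -> is_su11 (sumul P Q).
Proof.
  destruct P as [[a1 a2] [b1 b2]], Q as [[c1 c2] [d1 d2]].
  unfold is_su11, Cnorm2; simpl; intros HP HQ.
  transitivity ((a1*a1 + a2*a2 - (b1*b1 + b2*b2)) * (c1*c1 + c2*c2 - (d1*d1 + d2*d2))).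
  - ring.
  - rewrite HP, HQ; ring.
Qed.

Lemma is_su11_adj (P : C * C) : is_su11 P -> is_su11 (su_adj P).
Proof. unfold is_su11, su_adj; simpl. now rewrite Cnorm2_conj, Cnorm2_opp. Qed.

Lemma in_SU11_su_mat (P : C * C) : is_su11 P -> in_SU11 (su_mat P).
Proof.
  destruct P as [[a1 a2] [b1 b2]]; unfold is_su11, Cnorm2, in_SU11, mdet, su_mat; simpl.
  intros H. repeat split; repeat apply injective_projections; simpl; nra.
Qed.

Section SU11Action.

Variables (P : C * C) (z : C).
Hypotheses (HP : is_su11 P) (Hz : Cnorm2 z = 1).

Lemma sumob_num_den : Cnorm2 (sumob_num P z) = Cnorm2 (sumob_den P z).
Proof.
  unfold sumob_num, sumob_den. revert HP Hz. destruct P as [[a1 a2] [b1 b2]], z as [x y].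
  unfold is_su11, Cnorm2; simpl; intros H1 H2.
  match goal with |- ?L = ?R =>
    assert (K : L - R = (a1*a1 + a2*a2 - (b1*b1 + b2*b2)) * (x*x + y*y - 1)) by ring end.
  rewrite H2 in K. lra.
Qed.

Lemma sumob_den_neq_0 : sumob_den P z <> 0%C.
Proof.
  intros H0. pose proof sumob_num_den as E. rewrite H0 in E.
  assert (Hnum : sumob_num P z = 0%C).
  { destruct (Ceq_dec (sumob_num P z) 0%C) as [|Hn]; [assumption|].
    apply Cnorm2_gt_0 in Hn. unfold Cnorm2 in E at 2. simpl in E. lra. }
  assert (Hb : snd P = (- fst P * z)%C).
  { rewrite <- (Cplus_0_l (- fst P * z)%C), <- Hnum. unfold sumob_num; ring. }
  unfold is_su11 in HP. rewrite Hb, Cnorm2_mult, Cnorm2_opp, Hz in HP. lra.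
Qed.

Lemma sumob_circle : Cnorm2 (sumob P z) = 1.
Proof.
  pose proof (Cnorm2_gt_0 _ sumob_den_neq_0) as Hd.
  unfold sumob, Cdiv. rewrite Cnorm2_mult, sumob_num_den.
  destruct (sumob_den P z) as [x y].
  unfold Cnorm2 in *; simpl in *. field. lra.
Qed.

End SU11Action.

Lemma sumob_one (z : C) : sumob su_one z = z.
Proof. unfold sumob, sumob_num, sumob_den, su_one; simpl. rewrite !Cconj_RtoC. field. Qed.

Lemma sumob_mul (P Q : C * C) (z : C) : is_su11 P -> is_su11 Q -> Cnorm2 z = 1 ->
  sumob P (sumob Q z) = sumob (sumul P Q) z.
Proof.
  intros HP HQ Hz.
  pose proof (sumob_den_neq_0 Q z HQ Hz) as D1.
  pose proof (sumob_den_neq_0 P _ HP (sumob_circle Q z HQ Hz)) as D2.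
  pose proof (sumob_den_neq_0 _ z (is_su11_mul P Q HP HQ) Hz) as D3.
  destruct P as [a b], Q as [c d]. unfold sumob, sumob_num, sumob_den, sumul in *; simpl in *.
  rewrite !Cplus_conj, !Cmult_conj, !Cconj_conj in *.
  field. auto.
Qed.

Lemma is_derive_sumob (P : R -> C * C) (u : R -> C) (t : R) (da db du : C) :
  is_derive (fun s => fst (P s)) t da -> is_derive (fun s => snd (P s)) t db ->
  is_derive u t du -> sumob_den (P t) (u t) <> 0%C ->
  is_derive (fun s => sumob (P s) (u s)) t
    (((da * u t + fst (P t) * du + db) * sumob_den (P t) (u t)
      - sumob_num (P t) (u t) * (Cconj db * u t + Cconj (snd (P t)) * du + Cconj da))
     / (sumob_den (P t) (u t) * sumob_den (P t) (u t)))%C.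
Proof.
  intros Ha Hb Hu Hd. eapply is_derive_Ceq.
  - apply is_derive_Cmult.
    + exact (is_derive_Cplus _ _ _ _ _ (is_derive_Cmult _ _ _ _ _ Ha Hu) Hb).
    + apply (is_derive_Cinv (fun s => sumob_den (P s) (u s))); [| exact Hd].
      exact (is_derive_Cplus _ _ _ _ _
               (is_derive_Cmult _ _ _ _ _ (is_derive_Cconj _ _ _ Hb) Hu)
               (is_derive_Cconj _ _ _ Ha)).
  - cbv beta. field. exact Hd.
Qed.

(** * The planimeter equation along a segment *)

Definition rod_flow (K : R) (E : C) (t : R) : C * C :=
  (RtoC (cosh (K * t)), RtoC (sinh (K * t)) * E)%C.

Lemma rod_flow_add (K : R) (E : C) (s t : R) : Cnorm2 E = 1 ->
  rod_flow K E (s + t) = sumul (rod_flow K E s) (rod_flow K E t).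
Proof.
  intros HE. unfold rod_flow, sumul; simpl.
  rewrite Rmult_plus_distr_l, cosh_add, sinh_add, Cmult_conj, !Cconj_RtoC.
  destruct E as [e1 e2]. unfold Cnorm2 in HE; simpl in HE.
  repeat apply injective_projections; simpl; nsatz.
Qed.

Section RodFlow.

Variables (K : R) (E : C).
Hypothesis HE : Cnorm2 E = 1.

Definition riccati (u : C) : C := (RtoC K * (E - Cconj E * (u * u)))%C.

Lemma planimeter_riccati (l : R) (u du : C) :
  0 < l -> Cnorm2 u = 1 -> fst u * fst du + snd u * snd du = 0 ->
  Im (Cconj u * (RtoC (2 * l * K) * E - RtoC l * du)) = 0 -> du = riccati u.
Proof.
  unfold riccati. revert HE. destruct u as [x y], du as [d1 d2], E as [e1 e2].
  unfold Cnorm2, Im; simpl. intros HE1 Hl Hu Htan Him.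
  assert (Hrot : x * d2 - y * d1 = 2 * K * (x * e2 - y * e1)).
  { apply (Rmult_eq_reg_l l); [nra | lra]. }
  apply injective_projections; simpl; nsatz.
Qed.

Lemma riccati_planimeter (l : R) (u : C) :
  Cnorm2 u = 1 -> Im (Cconj u * (RtoC (2 * l * K) * E - RtoC l * riccati u)) = 0.
Proof.
  unfold riccati. destruct u as [x y], E as [e1 e2].
  unfold Cnorm2, Im; simpl. intros Hu. nsatz.
Qed.

Lemma is_su11_rod_flow (t : R) : is_su11 (rod_flow K E t).
Proof.
  unfold is_su11, rod_flow; simpl. rewrite Cnorm2_mult, HE.
  pose proof (cosh2_sinh2 (K * t)). unfold Cnorm2; simpl. nra.
Qed.

Lemma rod_flow_0 : rod_flow K E 0 = su_one.
Proof.
  unfold rod_flow, su_one. rewrite Rmult_0_r, cosh_0, sinh_0.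
  f_equal. apply Cmult_0_l.
Qed.

Lemma is_derive_rod_flow_fst (t : R) :
  is_derive (fun s => fst (rod_flow K E s)) t (RtoC (K * sinh (K * t))).
Proof. apply is_derive_RtoC, is_derive_cosh_scal. Qed.

Lemma is_derive_rod_flow_snd (t : R) :
  is_derive (fun s => snd (rod_flow K E s)) t (RtoC (K * cosh (K * t)) * E)%C.
Proof.
  eapply is_derive_Ceq.
  - apply is_derive_Cmult; [apply is_derive_RtoC, is_derive_sinh_scal | apply is_derive_Cconst].
  - cbv beta. ring.
Qed.

Lemma rod_flow_riccati (z0 : C) (t : R) : Cnorm2 z0 = 1 ->
  is_derive (fun s => sumob (rod_flow K E s) z0) t (riccati (sumob (rod_flow K E t) z0)).
Proof.
  intros Hz. pose proof (sumob_den_neq_0 _ _ (is_su11_rod_flow t) Hz) as Hd.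
  eapply is_derive_Ceq.
  - exact (is_derive_sumob (rod_flow K E) (fun _ => z0) t _ _ _ (is_derive_rod_flow_fst t)
             (is_derive_rod_flow_snd t) (is_derive_Cconst z0 t) Hd).
  - pose proof (Cnorm2_unit_neq_0 E HE) as HE0.
    unfold riccati, sumob, sumob_num, sumob_den, rod_flow in *; simpl in *.
    rewrite !Cmult_conj, !Cconj_RtoC, (Cconj_unit E HE) in *.
    assert (Hd' : (sinh (K * t) * z0 + cosh (K * t) * E)%C <> 0%C).
    { intros H0. apply Hd. rewrite <- (Cmult_0_r (/ E)), <- H0. field. exact HE0. }
    rewrite !RtoC_mult. field. split; assumption.
Qed.

Lemma rod_flow_adj_const (u : R -> C) (t : R) (du : C) :
  Cnorm2 (u t) = 1 -> is_derive u t du -> du = riccati (u t) ->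
  is_derive (fun s => sumob (su_adj (rod_flow K E s)) (u s)) t (RtoC 0).
Proof.
  intros Hu Hdu Hric.
  pose proof (sumob_den_neq_0 _ _ (is_su11_adj _ (is_su11_rod_flow t)) Hu) as Hd.
  eapply is_derive_Ceq.
  - exact (is_derive_sumob (fun s => su_adj (rod_flow K E s)) u t _ _ _
             (is_derive_Cconj _ _ _ (is_derive_rod_flow_fst t))
             (is_derive_Copp _ _ _ (is_derive_rod_flow_snd t)) Hdu Hd).
  - pose proof (Cnorm2_unit_neq_0 E HE) as HE0. rewrite Hric.
    unfold riccati, sumob, sumob_num, sumob_den, su_adj, rod_flow in *; simpl in *.
    rewrite ?Copp_conj, ?Cmult_conj, ?Cconj_conj, ?Cconj_RtoC, (Cconj_unit E HE) in *.
    assert (Hd' : (- sinh (K * t) * u t + cosh (K * t) * E)%C <> 0%C).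
    { intros H0. apply Hd. rewrite <- (Cmult_0_r (/ E)), <- H0. field. exact HE0. }
    rewrite !RtoC_mult. field. split; assumption.
Qed.

End RodFlow.

(** * Holonomy along segments and polygons *)

Definition seg_mat (l : R) (D : C) : C * C :=
  (RtoC (cosh (Cmod D / (2 * l))), RtoC (sinh (Cmod D / (2 * l))) * (D / RtoC (Cmod D)))%C.

Lemma seg_mat_rod_flow (l : R) (D : C) :
  seg_mat l D = rod_flow (Cmod D / (2 * l)) (D / RtoC (Cmod D))%C 1.
Proof. unfold seg_mat, rod_flow. now rewrite Rmult_1_r. Qed.

Lemma seg_hol_iff (l : R) (p q z0 z1 : C) :
  0 < l -> (q - p)%C <> 0%C -> Cnorm2 z0 = 1 ->
  seg_hol l p q z0 z1 <-> z1 = sumob (seg_mat l (q - p)) z0.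
Proof.
  intros Hl HD Hz0.
  rewrite seg_mat_rod_flow.
  pose proof (Cnorm2_normalize _ HD) as HE.
  assert (Hpolar : (q - p)%C
    = (RtoC (2 * l * (Cmod (q - p) / (2 * l))) * ((q - p) / RtoC (Cmod (q - p))))%C).
  { replace (2 * l * (Cmod (q - p) / (2 * l))) with (Cmod (q - p)) by (field; lra).
    apply Cpolar, HD. }
  set (K := Cmod (q - p) / (2 * l)) in *.
  set (E := ((q - p) / RtoC (Cmod (q - p)))%C) in *.
  clearbody K E.
  unfold seg_hol, planimeter_motion. split.
  - intros [u [U0 [U1 Hm]]].
    assert (Hu : forall s, 0 <= s <= 1 -> Cnorm2 (u s) = 1).
    { intros s Hs. apply Cmod_eq_1, (Hm s Hs). }
    assert (Hw : sumob (su_adj (rod_flow K E 1)) (u 1) = sumob (su_adj (rod_flow K E 0)) (u 0)).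
    { apply (is_derive_0_const_01 (fun s => sumob (su_adj (rod_flow K E s)) (u s))).
      - intros t Ht. destruct (Hm t Ht) as [_ [dg [du [_ [Hdu _]]]]]. eexists.
        exact (is_derive_sumob (fun s => su_adj (rod_flow K E s)) u t _ _ _
                 (is_derive_Cconj _ _ _ (is_derive_rod_flow_fst K E t))
                 (is_derive_Copp _ _ _ (is_derive_rod_flow_snd K E t)) Hdu
                 (sumob_den_neq_0 _ _ (is_su11_adj _ (is_su11_rod_flow K E HE t)) (Hu t Ht))).
      - intros t Ht. assert (Ht' : 0 <= t <= 1) by lra.
        destruct (Hm t Ht') as [_ [dg [du [Hdg [Hdu Him]]]]].
        rewrite (is_derive_C_unique _ _ _ _ Hdg (is_derive_segment p (q - p) t)), Hpolar in Him.
        apply (rod_flow_adj_const K E HE u t du (Hu t Ht') Hdu).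
        exact (planimeter_riccati K E HE l _ _ Hl (Hu t Ht')
                 (unit_curve_tangent u t du Ht Hu Hdu) Him). }
    rewrite rod_flow_0, su_adj_one, sumob_one, U0 in Hw.
    assert (HF : is_su11 (rod_flow K E 1)) by (apply is_su11_rod_flow, HE).
    rewrite <- U1, <- Hw, sumob_mul, sumul_adj_r, sumob_one; auto using is_su11_adj.
    apply Hu; lra.
  - intros ->. exists (fun t => sumob (rod_flow K E t) z0).
    split; [now rewrite rod_flow_0, sumob_one |]. split; [reflexivity |].
    intros t Ht. split; [apply Cmod_eq_1, sumob_circle; auto using is_su11_rod_flow |].
    exists (q - p)%C, (riccati K E (sumob (rod_flow K E t) z0)).
    split; [apply is_derive_segment |]. split; [apply rod_flow_riccati; assumption |].
    rewrite Hpolar. apply riccati_planimeter, sumob_circle; auto using is_su11_rod_flow.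
Qed.

Fixpoint edges (vs : list C) : list C :=
  match vs with
  | p :: ((q :: _) as rest) => (q - p)%C :: edges rest
  | _ => []
  end.

Definition poly_mat (l : R) (vs : list C) : C * C :=
  fold_right (fun D M => sumul M (seg_mat l D)) su_one (edges vs).

Lemma is_su11_seg_mat (l : R) (D : C) : D <> 0%C -> is_su11 (seg_mat l D).
Proof. intros HD. rewrite seg_mat_rod_flow. apply is_su11_rod_flow, Cnorm2_normalize, HD. Qed.

Lemma is_su11_poly_mat (l : R) (vs : list C) :
  List.Forall (fun D : C => D <> 0%C) (edges vs) -> is_su11 (poly_mat l vs).
Proof.
  unfold poly_mat. induction (edges vs) as [| D Ds IH]; intros HDs; [apply is_su11_one |].
  inversion_clear HDs. apply is_su11_mul; [apply IH | apply is_su11_seg_mat]; assumption.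
Qed.

Lemma poly_hol_iff (l : R) (vs : list C) (z z' : C) :
  0 < l -> List.Forall (fun D : C => D <> 0%C) (edges vs) -> Cnorm2 z = 1 ->
  poly_hol l vs z z' <-> z' = sumob (poly_mat l vs) z.
Proof.
  intros Hl. revert z. induction vs as [| p [| q r] IH]; intros z Hvs Hz;
    try (simpl; unfold poly_mat; simpl; rewrite sumob_one; split; congruence).
  inversion_clear Hvs as [| ? ? Hpq Hr].
  assert (Hseg : is_su11 (seg_mat l (q - p))) by (apply is_su11_seg_mat, Hpq).
  assert (Hz1 : Cnorm2 (sumob (seg_mat l (q - p)) z) = 1) by (apply sumob_circle; assumption).
  change (poly_mat l (p :: q :: r)) with (sumul (poly_mat l (q :: r)) (seg_mat l (q - p))).
  rewrite <- sumob_mul by auto using is_su11_poly_mat.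
  simpl poly_hol. split.
  - intros [z1 [Hs Hrest]]. apply (seg_hol_iff l p q z z1 Hl Hpq Hz) in Hs. subst z1.
    apply IH; assumption.
  - intros Hz'. exists (sumob (seg_mat l (q - p)) z). split.
    + apply seg_hol_iff; auto.
    + apply IH; assumption.
Qed.

Lemma seg_mat_opp (l : R) (D : C) : seg_mat l (- D) = su_flip (seg_mat l D).
Proof. unfold seg_mat, su_flip; simpl. rewrite Cmod_opp. f_equal. unfold Cdiv. ring. Qed.

Lemma seg_mat_double (l : R) (D : C) : D <> 0%C ->
  seg_mat l (D + D) = sumul (seg_mat l D) (seg_mat l D).
Proof.
  intros HD. pose proof (proj1 (Cmod_gt_0 D) HD) as Hpos.
  assert (Hmod : Cmod (D + D) = 2 * Cmod D).
  { replace (D + D)%C with (RtoC 2 * D)%C by ring.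
    rewrite Cmod_mult, Cmod_R, Rabs_pos_eq; lra. }
  rewrite !seg_mat_rod_flow, <- rod_flow_add by (apply Cnorm2_normalize, HD).
  unfold rod_flow. rewrite Hmod.
  replace (2 * Cmod D / (2 * l) * 1) with (Cmod D / (2 * l) * (1 + 1)) by (unfold Rdiv; ring).
  do 2 f_equal. rewrite RtoC_mult. field. intros [=]; lra.
Qed.

Lemma su_adj_seg_mat (l : R) (D : C) : su_adj (seg_mat l D) = su_flip (seg_mat l D).
Proof. unfold seg_mat, su_adj, su_flip; simpl. now rewrite Cconj_RtoC. Qed.

Lemma seg_mat_cosh_sinh (l : R) (v : C) :
  seg_mat l v = (RtoC (cosh (Cmod v / (2 * l))),
                 - (RtoC (- sinh (Cmod v / (2 * l))) * (v / RtoC (Cmod v))))%C.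
Proof. unfold seg_mat. f_equal. rewrite RtoC_opp. ring. Qed.

(** * The figure eight *)

Lemma edges_figure_eight (v w : C) :
  edges [RtoC 0; v; v + w; w; - w; - v - w; - v; RtoC 0]%C = [v; w; - v; - w + - w; - v; w; v]%C.
Proof. simpl. repeat f_equal; ring. Qed.

Lemma edges_figure_eight_neq_0 (v w : C) : v <> 0%C -> w <> 0%C ->
  List.Forall (fun D : C => D <> 0%C) [v; w; - v; - w + - w; - v; w; v]%C.
Proof.
  intros Hv Hw. pose proof (Copp_neq_0 v Hv). pose proof (Copp_neq_0 w Hw).
  repeat constructor; try assumption.
  replace (- w + - w)%C with (RtoC 2 * - w)%C by ring.
  apply Cmult_neq_0; [intros [=]; lra | assumption].
Qed.

(* The hypotheses say that [su_flip] inverts [A] and [W], so [B] is their commutator and the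
   word [A W A^-1 W^-2 A^-1 W A] of the figure eight is [B] times the [su_flip]-image of
   [B^-1]. *)
Lemma figure_eight_word (A W : C * C) :
  su_adj A = su_flip A -> su_adj W = su_flip W ->
  let B := sumul (sumul (sumul A W) (su_flip A)) (su_flip W) in
  sumul (sumul (sumul (sumul (sumul (sumul (sumul su_one A) W) (su_flip A))
    (sumul (su_flip W) (su_flip W))) (su_flip A)) W) A
  = sumul B (su_flip (su_adj B)).
Proof.
  intros HA HW B. unfold B.
  rewrite !su_adj_mul, !su_adj_flip, HA, HW, !su_flip_flip, !su_flip_mul, !su_flip_flip.
  rewrite sumul_one_l, !sumul_assoc. reflexivity.
Qed.

Lemma poly_mat_figure_eight (l : R) (v w : C) : w <> 0%C ->
  let A := seg_mat l v in let W := seg_mat l w in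
  let B := sumul (sumul (sumul A W) (su_flip A)) (su_flip W) in
  poly_mat l [RtoC 0; v; v + w; w; - w; - v - w; - v; RtoC 0]%C = sumul B (su_flip (su_adj B)).
Proof.
  intros Hw A W B. unfold poly_mat. rewrite edges_figure_eight. cbn [fold_right].
  rewrite seg_mat_double by (apply Copp_neq_0, Hw).
  rewrite !seg_mat_opp. apply figure_eight_word; apply su_adj_seg_mat.
Qed.

Lemma commutator_offdiag (a c : R) (b d : C) : a * a - Cnorm2 b = 1 ->
  let A := (RtoC a, - b)%C in let W := (RtoC c, - d)%C in
  snd (sumul (sumul (sumul A W) (su_flip A)) (su_flip W))
  = (- (Cconj b * d - Cconj (Cconj b * d)) * (RtoC a * d + b * RtoC c))%C.
Proof.
  destruct b as [b1 b2], d as [d1 d2]. unfold Cnorm2; simpl. intros Ha.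
  apply injective_projections; simpl; nsatz.
Qed.

Lemma figure_eight_fst (a c : R) (b d : C) : a * a - Cnorm2 b = 1 -> c * c - Cnorm2 d = 1 ->
  let A := (RtoC a, - b)%C in let W := (RtoC c, - d)%C in
  let B := sumul (sumul (sumul A W) (su_flip A)) (su_flip W) in
  fst (sumul B (su_flip (su_adj B)))
  = RtoC (1 + 8 * Im (Cconj b * d) ^ 2 * Cnorm2 (RtoC a * d + b * RtoC c)).
Proof.
  intros Ha Hc A W B.
  assert (HB : is_su11 B).
  { unfold B, A, W, su_flip; cbn [fst snd].
    repeat apply is_su11_mul; apply is_su11_real; rewrite ?Cnorm2_opp; assumption. }
  unfold is_su11 in HB.
  assert (HsndB : Cnorm2 (snd B) = 4 * Im (Cconj b * d) ^ 2 * Cnorm2 (RtoC a * d + b * RtoC c)).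
  { unfold B, A, W. rewrite commutator_offdiag by assumption.
    now rewrite Cnorm2_mult, Cnorm2_opp, Cnorm2_sub_conj. }
  clearbody B. rewrite sumul_flip_adj. cbn [fst]. f_equal.
  replace (Cnorm2 (fst B)) with (1 + Cnorm2 (snd B)) by lra.
  rewrite HsndB. ring.
Qed.

Lemma cosh_sinh_unit (k : R) (e : C) : Cnorm2 e = 1 ->
  cosh k * cosh k - Cnorm2 (RtoC (- sinh k) * e)%C = 1.
Proof.
  intros He. rewrite Cnorm2_mult, He. pose proof (cosh2_sinh2 k).
  unfold Cnorm2; simpl. nra.
Qed.

Lemma Im_conj_mul_scaled_neq_0 (s1 s2 m1 m2 : R) (v w : C) :
  0 < s1 -> 0 < s2 -> 0 < m1 -> 0 < m2 -> Im (Cconj v * w)%C <> 0 ->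
  Im (Cconj (RtoC (- s1) * (v / RtoC m1)) * (RtoC (- s2) * (w / RtoC m2)))%C <> 0.
Proof.
  intros Hs1 Hs2 Hm1 Hm2 Hvw.
  replace (Im _) with (s1 * s2 / (m1 * m2) * Im (Cconj v * w)%C).
  - apply Rmult_integral_contrapositive. split; [| exact Hvw].
    apply Rgt_not_eq, Rdiv_lt_0_compat; apply Rmult_lt_0_compat; assumption.
  - destruct v, w. unfold Im, Cdiv, Cinv, Cmult, Cconj, RtoC; simpl. field. lra.
Qed.

Lemma figure_eight_trace_gt_2 (a c : R) (b d : C) : 0 < a -> Im (Cconj b * d)%C <> 0 ->
  2 < 2 + 16 * Im (Cconj b * d)%C ^ 2 * Cmod (RtoC a * d + b * RtoC c)%C ^ 2.
Proof.
  intros Ha Hbd.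
  assert (HX : (RtoC a * d + b * RtoC c)%C <> 0%C).
  { intros H0.
    assert (Him : Im (Cconj b * (RtoC a * d + b * RtoC c))%C = a * Im (Cconj b * d)%C).
    { destruct b, d; unfold Im; simpl; ring. }
    rewrite H0 in Him. replace (Im (Cconj b * RtoC 0)%C) with 0 in Him by (unfold Im; simpl; ring).
    apply Hbd, (Rmult_eq_reg_l a); lra. }
  pose proof (proj1 (Cmod_gt_0 _) HX).
  assert (0 < Im (Cconj b * d)%C ^ 2) by (apply pow2_gt_0, Hbd).
  assert (0 < Cmod (RtoC a * d + b * RtoC c)%C ^ 2) by (apply pow2_gt_0; lra).
  nra.
Qed.

(** * Hyperbolic elements of SU(1,1) *)

Section Hyperbolic.

Variables (al r : R) (z1 : C).
Hypotheses (Hr : 0 < r) (Har : al * al - r * r = 1) (Hal : 1 < al) (Hz1 : Cnorm2 z1 = 1).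

Let P : C * C := (RtoC al, RtoC r * z1)%C.
Let z2 : C := (- z1)%C.
Let lam : R := (al - r) / (al + r).

Lemma is_su11_hyperbolic : is_su11 P.
Proof. apply is_su11_real. rewrite Cnorm2_mult, Hz1. unfold Cnorm2; simpl. lra. Qed.

Lemma Cnorm2_z2 : Cnorm2 z2 = 1.
Proof. unfold z2. now rewrite Cnorm2_opp. Qed.

Lemma z1_neq_z2 : z1 <> z2.
Proof.
  unfold z2. intros H. revert Hz1. rewrite H. destruct z1 as [x y].
  injection H as Hx Hy. unfold Cnorm2; simpl. nra.
Qed.

Lemma lam_bounds : 0 < lam < 1.
Proof.
  unfold lam. assert (0 < al - r) by nra. split; [apply Rdiv_lt_0_compat; lra |].
  apply (Rmult_lt_reg_r (al + r)); [lra |].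
  unfold Rdiv. rewrite Rmult_assoc, Rinv_l, Rmult_1_r; lra.
Qed.

(* [z1] and [z2] are the eigendirections, with multipliers [al - r] and [al + r]. *)
Lemma hyperbolic_step (z : C) : Cnorm2 z = 1 ->
  (sumob P z - z1)%C = ((z - z1) * RtoC (al - r) / sumob_den P z)%C /\
  (sumob P z - z2)%C = ((z - z2) * RtoC (al + r) / sumob_den P z)%C.
Proof.
  intros Hz. pose proof (sumob_den_neq_0 P z is_su11_hyperbolic Hz) as Hd.
  pose proof (Cnorm2_unit_neq_0 z1 Hz1) as Hz10.
  unfold z2, sumob, sumob_num, sumob_den, P in *; simpl in *.
  rewrite Cmult_conj, !Cconj_RtoC, (Cconj_unit z1 Hz1) in *.
  assert (Hd' : (RtoC r * z + RtoC al * z1)%C <> 0%C).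
  { intros H0. apply Hd. rewrite <- (Cmult_0_r (/ z1)), <- H0. field. exact Hz10. }
  assert (Hal' : (RtoC (al - r) * RtoC (al + r))%C = RtoC 1).
  { rewrite <- RtoC_mult. f_equal. nra. }
  split; rewrite ?RtoC_minus, ?RtoC_plus in *; field; auto.
Qed.

Let m : C -> C := sumob P.

Definition rho (w : C) : R := Cmod (w - z1) / Cmod (w - z2).

Lemma rho_step (z : C) : Cnorm2 z = 1 -> z <> z2 -> m z <> z2 /\ rho (m z) = lam * rho z.
Proof.
  intros Hz Hne. destruct (hyperbolic_step z Hz) as [E1 E2].
  pose proof (sumob_den_neq_0 P z is_su11_hyperbolic Hz) as Hd.
  pose proof (proj1 (Cmod_gt_0 _) (Cminus_neq_0 _ _ Hne)) as Hzz2.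
  pose proof (proj1 (Cmod_gt_0 _) Hd) as Hdpos.
  assert (Hpos : 0 < al - r) by nra.
  assert (Hmod2 : Cmod (m z - z2) = Cmod (z - z2) * (al + r) / Cmod (sumob_den P z)).
  { unfold m. rewrite E2, Cmod_div, Cmod_mult, Cmod_R, Rabs_pos_eq by (auto; lra). reflexivity. }
  split.
  - intros Hm. rewrite Hm in Hmod2. replace (z2 - z2)%C with (RtoC 0) in Hmod2 by ring.
    rewrite Cmod_0 in Hmod2.
    assert (0 < Cmod (z - z2) * (al + r) / Cmod (sumob_den P z)).
    { apply Rdiv_lt_0_compat; [apply Rmult_lt_0_compat |]; lra. }
    lra.
  - unfold rho, lam. rewrite Hmod2. unfold m.
    rewrite E1, Cmod_div, Cmod_mult, Cmod_R, Rabs_pos_eq by (auto; lra).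
    field. repeat split; lra.
Qed.

Lemma iterate_rho (z : C) : Cnorm2 z = 1 -> z <> z2 -> forall n,
  Cnorm2 (Nat.iter n m z) = 1 /\ Nat.iter n m z <> z2 /\ rho (Nat.iter n m z) = lam ^ n * rho z.
Proof.
  intros Hz Hne n. induction n as [| n [Hn1 [Hn2 Hn3]]]; simpl.
  - repeat split; auto. ring.
  - destruct (rho_step _ Hn1 Hn2) as [H2 H3]. repeat split; auto.
    + apply sumob_circle; [apply is_su11_hyperbolic | exact Hn1].
    + rewrite H3, Hn3. ring.
Qed.

Lemma iterate_dist_z1 (z : C) : Cnorm2 z = 1 -> z <> z2 -> forall n,
  Cmod (Nat.iter n m z - z1) <= 2 * rho z * lam ^ n.
Proof.
  intros Hz Hne n. destruct (iterate_rho z Hz Hne n) as [H1 [H2 H3]].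
  pose proof (proj1 (Cmod_gt_0 _) (Cminus_neq_0 _ _ H2)) as Hp.
  assert (E : Cmod (Nat.iter n m z - z1) = rho (Nat.iter n m z) * Cmod (Nat.iter n m z - z2)).
  { unfold rho. field. lra. }
  rewrite E, H3.
  pose proof (Cmod_sub_unit_le_2 _ _ H1 Cnorm2_z2).
  assert (0 <= rho z).
  { unfold rho. apply Rdiv_le_0_compat; [apply Cmod_ge_0 |].
    apply (proj1 (Cmod_gt_0 _)), Cminus_neq_0, Hne. }
  pose proof lam_bounds. assert (0 <= lam ^ n) by (apply pow_le; lra).
  assert (0 <= rho z * lam ^ n) by (apply Rmult_le_pos; lra).
  nra.
Qed.

Lemma hyperbolic_attracting : attracting_on_circle m z1.
Proof.
  pose proof (proj1 (Cmod_gt_0 _) (Cminus_neq_0 _ _ z1_neq_z2)) as Hp.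
  exists (Cmod (z1 - z2) / 2). split; [lra |].
  intros z Hz Hzz. apply Cmod_eq_1 in Hz.
  assert (Hne : z <> z2).
  { intros ->. rewrite <- Cmod_opp in Hzz.
    replace (- (z2 - z1))%C with (z1 - z2)%C in Hzz by ring. lra. }
  apply (is_lim_seq_le_le (fun _ => 0) _ (fun n => 2 * rho z * lam ^ n)).
  - intros n. split; [apply Cmod_ge_0 | apply iterate_dist_z1; assumption].
  - apply is_lim_seq_const.
  - replace (Finite 0) with (Rbar_mult (2 * rho z) 0) by (simpl; f_equal; ring).
    apply is_lim_seq_scal_l, is_lim_seq_geom. pose proof lam_bounds. rewrite Rabs_pos_eq; lra.
Qed.

Lemma hyperbolic_repelling : repelling_on_circle m z2.
Proof.
  pose proof (proj1 (Cmod_gt_0 _) (Cminus_neq_0 _ _ z1_neq_z2)) as Hp.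
  set (eps := Cmod (z1 - z2) / 2).
  exists eps. split; [unfold eps; lra |].
  intros z Hz [Hz0 _]. apply Cmod_eq_1 in Hz.
  assert (Hne : z <> z2).
  { intros ->. replace (z2 - z2)%C with (RtoC 0) in Hz0 by ring. rewrite Cmod_0 in Hz0. lra. }
  assert (Hrho : 0 <= rho z).
  { unfold rho. apply Rdiv_le_0_compat; [apply Cmod_ge_0 |].
    apply (proj1 (Cmod_gt_0 _)), Cminus_neq_0, Hne. }
  pose proof lam_bounds.
  destruct (pow_lt_1_zero lam ltac:(rewrite Rabs_pos_eq; lra) (eps / (2 * rho z + 1))
              ltac:(apply Rdiv_lt_0_compat; unfold eps; lra)) as [N HN].
  exists N. specialize (HN N (Nat.le_refl N)). rewrite Rabs_pos_eq in HN by (apply pow_le; lra).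
  pose proof (iterate_dist_z1 z Hz Hne N) as Hdist.
  assert (Hsmall : 2 * rho z * lam ^ N < eps).
  { apply Rmult_lt_compat_l with (r := 2 * rho z + 1) in HN; [| lra].
    replace ((2 * rho z + 1) * (eps / (2 * rho z + 1))) with eps in HN by (field; lra).
    assert (0 <= lam ^ N) by (apply pow_le; lra). nra. }
  assert (Htri : Cmod (z1 - z2) <= Cmod (Nat.iter N m z - z1) + Cmod (Nat.iter N m z - z2)).
  { replace (z1 - z2)%C with (- (Nat.iter N m z - z1) + (Nat.iter N m z - z2))%C by ring.
    rewrite <- (Cmod_opp (Nat.iter N m z - z1)). apply Cmod_triangle. }
  unfold eps in *. lra.
Qed.

Lemma hyperbolic_fixed_z1 : m z1 = z1.
Proof.
  destruct (hyperbolic_step z1 Hz1) as [E1 _]. fold m in E1.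
  apply Ceq_minus. rewrite E1. unfold Cdiv. ring.
Qed.

Lemma hyperbolic_fixed_z2 : m z2 = z2.
Proof.
  destruct (hyperbolic_step z2 Cnorm2_z2) as [_ E2]. fold m in E2.
  apply Ceq_minus. rewrite E2. unfold Cdiv. ring.
Qed.

Lemma hyperbolic_fixed_points (z : C) : Cnorm2 z = 1 -> m z = z -> z = z1 \/ z = z2.
Proof.
  intros Hz Hf. destruct (hyperbolic_step z Hz) as [E1 E2].
  pose proof (sumob_den_neq_0 P z is_su11_hyperbolic Hz) as Hd.
  fold m in E1, E2. rewrite Hf in E1, E2.
  set (Q := sumob_den P z) in *.
  assert (A1 : ((z - z1) * (Q - RtoC (al - r)))%C = RtoC 0).
  { transitivity ((z - z1) * Q - (z - z1) * RtoC (al - r))%C; [ring |].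
    rewrite E1 at 1. field. exact Hd. }
  assert (A2 : ((z - z2) * (Q - RtoC (al + r)))%C = RtoC 0).
  { transitivity ((z - z2) * Q - (z - z2) * RtoC (al + r))%C; [ring |].
    rewrite E2 at 1. field. exact Hd. }
  destruct (Cmult_integral _ _ A1) as [H1 | H1]; [left; apply Ceq_minus, H1 |].
  destruct (Cmult_integral _ _ A2) as [H2 | H2]; [right; apply Ceq_minus, H2 |].
  exfalso. apply Ceq_minus in H1, H2. rewrite H1 in H2. injection H2. lra.
Qed.

End Hyperbolic.

Lemma hyperbolic_dynamics (al : R) (be : C) : is_su11 (RtoC al, be) -> 1 < al ->
  let f := mob (su_mat (RtoC al, be)) in
  exists z1 z2 : C,
    on_circle z1 /\ on_circle z2 /\ z1 <> z2 /\ f z1 = z1 /\ f z2 = z2 /\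
    (forall z, on_circle z -> f z = z -> z = z1 \/ z = z2) /\
    attracting_on_circle f z1 /\ repelling_on_circle f z2.
Proof.
  intros Hsu Hal f. apply is_su11_real in Hsu.
  assert (Har : al * al - Cmod be * Cmod be = 1) by (pose proof (Cmod_sqr be); nra).
  assert (Hbe : be <> 0%C).
  { intros ->. rewrite Cmod_0 in Har. nra. }
  pose proof (proj1 (Cmod_gt_0 be) Hbe) as Hr.
  pose proof (Cnorm2_normalize be Hbe) as Hz1.
  unfold f. rewrite (Cpolar be Hbe). set (z1 := (be / RtoC (Cmod be))%C) in *. clearbody z1.
  set (r := Cmod be) in *. clearbody r.
  change (mob (su_mat (RtoC al, RtoC r * z1)%C)) with (sumob (RtoC al, RtoC r * z1)%C).
  exists z1, (- z1)%C.
  repeat split.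
  - now apply Cmod_eq_1.
  - apply Cmod_eq_1. now rewrite Cnorm2_opp.
  - now apply z1_neq_z2.
  - now apply hyperbolic_fixed_z1.
  - now apply hyperbolic_fixed_z2.
  - intros z Hz. apply Cmod_eq_1 in Hz. now apply hyperbolic_fixed_points.
  - now apply hyperbolic_attracting.
  - now apply hyperbolic_repelling.
Qed.

Theorem mainTheorem8 (l : R) (v w : C)
  (hl : (0 < l)%R)
  (hvw : Im (Cmult (Cconj v) w) <> 0%R) :
  let a : C := RtoC (cosh (Cmod v / (2 * l))) in
  let b : C := Cmult (RtoC (- sinh (Cmod v / (2 * l)))) (Cdiv v (RtoC (Cmod v))) in
  let c : C := RtoC (cosh (Cmod w / (2 * l))) in
  let d : C := Cmult (RtoC (- sinh (Cmod w / (2 * l)))) (Cdiv w (RtoC (Cmod w))) in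
  let tr : R := (2 + 16 * (Im (Cmult (Cconj b) d)) ^ 2
                   * (Cmod (Cplus (Cmult a d) (Cmult b c))) ^ 2)%R in
  let H := poly_hol l
     [RtoC 0; v; Cplus v w; w; Copp w; Cminus (Copp v) w; Copp v; RtoC 0] in
  (forall z, on_circle z -> exists z', H z z') /\
  exists M : cmat2,
    in_SU11 M /\
    (forall z z', on_circle z -> H z z' -> z' = mob M z) /\
    mtrace M = RtoC tr /\ (2 < tr)%R /\
    exists z1 z2 : C,
      on_circle z1 /\ on_circle z2 /\ z1 <> z2 /\
      mob M z1 = z1 /\ mob M z2 = z2 /\
      (forall z, on_circle z -> mob M z = z -> z = z1 \/ z = z2) /\
      attracting_on_circle (mob M) z1 /\ repelling_on_circle (mob M) z2.
Proof.
  intros a b c d tr H.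
  assert (Hv : v <> 0%C) by (intros ->; apply hvw; unfold Im; simpl; ring).
  assert (Hw : w <> 0%C) by (intros ->; apply hvw; unfold Im; simpl; ring).
  pose proof (proj1 (Cmod_gt_0 v) Hv). pose proof (proj1 (Cmod_gt_0 w) Hw).
  set (vs := [RtoC 0; v; v + w; w; - w; - v - w; - v; RtoC 0]%C) in H.
  assert (Hedges : List.Forall (fun D : C => D <> 0%C) (edges vs)).
  { unfold vs. rewrite edges_figure_eight. apply edges_figure_eight_neq_0; assumption. }
  assert (Htr : 2 < tr).
  { apply figure_eight_trace_gt_2; [apply cosh_pos |].
    apply Im_conj_mul_scaled_neq_0; try apply sinh_pos; try apply Rdiv_lt_0_compat; lra. }
  assert (Hfst : fst (poly_mat l vs) = RtoC (tr / 2)).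
  { unfold vs. rewrite poly_mat_figure_eight, !seg_mat_cosh_sinh, figure_eight_fst
      by (assumption || apply cosh_sinh_unit, Cnorm2_normalize; assumption).
    unfold tr. rewrite Cmod_sqr. f_equal. fold a b c d. field. }
  pose proof (is_su11_poly_mat l vs Hedges) as Hsu.
  split.
  { intros z Hz. exists (sumob (poly_mat l vs) z). apply poly_hol_iff; auto. now apply Cmod_eq_1. }
  exists (su_mat (poly_mat l vs)).
  split; [now apply in_SU11_su_mat |].
  split; [intros z z' Hz; apply poly_hol_iff; auto; now apply Cmod_eq_1 |].
  destruct (poly_mat l vs) as [al be]. simpl in Hfst. subst al.
  split; [unfold mtrace; simpl; rewrite Cconj_RtoC, <- RtoC_plus; f_equal; field |].
  split; [exact Htr |].
  apply hyperbolic_dynamics; [exact Hsu | lra].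
Qed.
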